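(* Let $N\ge3$ be odd, $K=\tilde F(N)$, and let $\mathcal{F}$ be a $K\times N$ circular Florentine rectangle over $\mathbb{Z}_N$ with rows $\pi_0,\dots,\pi_{K-1}$; put $g_{i,j}=\pi_i^{-1}(j)$. Let $T\ge1$, $P=N+T$, $L=NP$, $\mathcal{I}\subseteq\mathbb{Z}_P$ with $|\mathcal{I}|=T$, and $\mathbb{Z}_P\setminus\mathcal{I}=\{l_0<\dots<l_{N-1}\}$. Let $\mathcal{H}=(h_{c,s})_{0\le c,s<N}$ be a complex matrix with $|h_{c,s}|=1$ for all $c,s$ and $\sum_{s=0}^{N-1}h_{c_0,s}h^*_{c_1,s}=0$ for $c_0\ne c_1$ (e.g. the unnormalized DFT matrix). For $0\le i<K$, $0\le c<N$, define the $N\times P$ matrix $\mathcal{D}^i_c=(d^{i,c}_{j,k})$ by $d^{i,c}_{j,k}=\sqrt{P/N}\,\omega_N^{j g_{i,t}}h_{c,t}$ if $k=l_t$, and $d^{i,c}_{j,k}=0$ if $k\in\mathcal{I}$; let $\hat u^{i,c}_n=d^{i,c}_{r,s}$ with $r=\lfloor n/P\rfloor$, $s=n-Pr$ ($0\le n<L$), let $U^{i,c}$ be the time-domain sequence $u^{i,c}_t=\frac{1}{\sqrt L}\sum_{n=0}^{L-1}\hat u^{i,c}_n\omega_L^{nt}$, and let $\mathcal{U}^i=\{U^{i,c}:0\le c<N\}$. Then: (0) every $U^{i,c}$ is unimodular; (1) with $\Omega=\{s+aP:s\in\mathcal{I},a\in\mathbb{Z}_N\}$, $\hat u^{i,c}_n=0$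 for $n\in\Omega$ and $|\hat u^{i,c}_n|=\sqrt{P/N}$ for $n\notin\Omega$; (2) each $\mathcal{U}^i$ is an $(N,NP,N)$-ZCZ sequence set, i.e. $\theta_{U^{i,c}}(\tau)=0$ for $0<\tau<N$ and $\theta_{U^{i,c_0},U^{i,c_1}}(\tau)=0$ for $c_0\ne c_1$ and $0\le\tau<N$; in particular $NP-|\Omega|=N^2=MZ$ with $M=Z=N$; (3) $|\theta_{U^{i,c_0},U^{i',c_1}}(\tau)|=P=\frac{NP}{\sqrt{NP-|\Omega|}}$ for all $0\le i\ne i'<K$, all $0\le c_0,c_1<N$ and all $0\le\tau<L$.
   Context: $\omega_n=e^{2\pi\sqrt{-1}/n}$. An $M\times N$ circular Florentine rectangle (CFR) over $\mathbb{Z}_N$ is an $M\times N$ array whose rows $\pi_i:\mathbb{Z}_N\to\mathbb{Z}_N$ are permutations such that for every $m\in\mathbb{Z}_N\setminus\{0\}$ and all $i,j,x,y$: $(\pi_i(x),\pi_i(x+m))=(\pi_j(y),\pi_j(y+m))$ (indices mod $N$) iff $i=j$ and $x=y$. $\tilde F(N)$ is the largest $M$ for which an $M\times N$ CFR exists (for odd $N\ge3$, $\tilde F(N)\ge2$). $\pi_i^{-1}$ is the inverse permutation with values in $\{0,\dots,N-1\}$. Periodic correlation: $\theta_{C,D}(\tau)=\sum_{t=0}^{L-1}c_td^*_{\langle t+\tau\rangle_L}$, $\theta_C=\theta_{C,C}$. An $(M,L,Z)$-ZCZ set is a set of $M$ length-$L$ sequences whose autocorrelations vanish for $0<\tau<Z$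 and whose pairwise cross-correlations vanish for $0\le\tau<Z$. *)

From HB Require Import structures.
From mathcomp Require Import all_boot all_order all_algebra.
From mathcomp Require Import fingroup perm algC.
Set Implicit Arguments. Unset Strict Implicit. Unset Printing Implicit Defensive.
Import Order.TTheory GRing.Theory Num.Theory.
Local Open Scope ring_scope.

(* omega n = e^{2 pi i / n}: n.-root (-1) is the n-th root of -1 with minimal
   non-negative argument, i.e. e^{i pi / n}; its square is e^{2 pi i / n}. *)
Definition omega (n : nat) : algC := (n.-root (-1)) ^+ 2.

Definition addI (N : nat) (x m : 'I_N) : 'I_N :=
  Ordinal (ltn_pmod (x + m) (leq_ltn_trans (leq0n x) (ltn_ord x))).

Definition is_CFR (N M : nat) (pi : 'I_M -> {perm 'I_N}) : Prop :=
  forall m : 'I_N, nat_of_ord m != 0%N ->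
  forall (i j : 'I_M) (x y : 'I_N),
    (pi i x, pi i (addI x m)) = (pi j y, pi j (addI y m)) <-> (i = j /\ x = y).

Definition CFR_exists (N M : nat) : Prop := exists pi : 'I_M -> {perm 'I_N}, is_CFR pi.

Definition is_Ftilde (N K : nat) : Prop :=
  CFR_exists N K /\ forall M, CFR_exists N M -> (M <= K)%N.

Definition ginv (N K : nat) (pi : 'I_K -> {perm 'I_N}) (i : 'I_K) (j : 'I_N) : nat :=
  nat_of_ord ((pi i)^-1%g j).

(* entry d^{i,c}_{j,k} of D^i_c, with l_t the t-th element of Z_P \ I *)
Definition dentry (N P K : nat) (pi : 'I_K -> {perm 'I_N}) (l : 'I_N -> 'I_P)
    (h : 'I_N -> 'I_N -> algC) (i : 'I_K) (c : 'I_N) (j k : nat) : algC :=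
  if [pick t : 'I_N | nat_of_ord (l t) == k] is Some t then
    sqrtC (P%:R / N%:R) * omega N ^+ (j * ginv pi i t) * h c t
  else 0.

Definition uhat (N P K : nat) (pi : 'I_K -> {perm 'I_N}) (l : 'I_N -> 'I_P)
    (h : 'I_N -> 'I_N -> algC) (i : 'I_K) (c : 'I_N) (n : nat) : algC :=
  dentry pi l h i c (n %/ P) (n %% P).

Definition useq (N P K : nat) (pi : 'I_K -> {perm 'I_N}) (l : 'I_N -> 'I_P)
    (h : 'I_N -> 'I_N -> algC) (i : 'I_K) (c : 'I_N) (t : nat) : algC :=
  (sqrtC (N * P)%:R)^-1 *
    \sum_(n < N * P) uhat pi l h i c n * omega (N * P) ^+ (n * t).

Definition pcorr (L : nat) (C D : nat -> algC) (tau : nat) : algC :=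
  \sum_(t < L) C t * (D ((t + tau) %% L)%N)^*.

Definition OmegaSet (N P : nat) (I : {set 'I_P}) : {set 'I_(N * P)} :=
  [set n : 'I_(N * P) | [exists s : 'I_P, exists a : 'I_N,
      (s \in I) && (nat_of_ord n == s + a * P)%N]].

From HB Require Import structures.
From mathcomp Require Import all_boot all_order all_algebra.
From mathcomp Require Import fingroup perm algC cyclotomic.
From mathcomp Require Import ring zify.
Import Order.TTheory GRing.Theory Num.Theory.
Local Open Scope ring_scope.

(* Write w = omega N, z = omega (N P) and eta = z ^+ P, a primitive N-th root of
   unity.  In the inverse DFT of \hat u, the sum over the row index r of D is
   the geometric sum of (w ^+ g * eta ^+ t) ^+ r, with g = pi_i^-1 of the
   column; it vanishes unless w ^+ g * eta ^+ t = 1.  So a single column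
   k = pi_i (slot t) survives and u_t = h_{c,k} z ^+ (l_k t), where slot t only
   depends on t mod N.  Writing t = y N + x in a correlation, the sum over y is
   a geometric sum in z ^+ N, a primitive P-th root, which vanishes unless the
   active columns at times x and x + tau coincide.  For i = i' and 0 < tau < N
   they never do, for tau = 0 one gets P times an inner product of rows of h,
   and for i <> i' the circular Florentine property leaves exactly one x, hence
   modulus P.  That omega n = (n.-root (-1)) ^+ 2 is a primitive n-th root of
   unity follows from the maximality of the real part of the principal root. *)

Lemma sum_expr_unity (F : fieldType) (x : F) q : x ^+ q = 1 ->
  \sum_(k < q) x ^+ k = if x == 1 then q%:R else 0.
Proof.
move=> xq1; have [-> | x_neq1] := eqVneq x 1.
  by rewrite (eq_bigr (fun=> 1)) ?sumr_const ?card_ord // => k _; rewrite expr1n.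
apply/eqP; have := subrX1 x q; rewrite xq1 subrr => /esym/eqP.
by rewrite mulf_eq0 subr_eq0 (negbTE x_neq1).
Qed.

Lemma prim_root_ord_inj {F : fieldType} {n : nat} {w : F} :
  n.-primitive_root w -> injective (fun i : 'I_n => w ^+ i).
Proof.
move=> prim_w i j /eqP; rewrite (eq_prim_root_expr prim_w) !modn_small //.
by move/eqP/val_inj.
Qed.

Lemma prim_root_neq0 {R : idomainType} {n : nat} {w : R} : n.-primitive_root w -> w != 0.
Proof.
move=> prim_w; apply/eqP => w0; have := prim_expr_order prim_w.
by rewrite w0 expr0n gtn_eqF ?(prim_order_gt0 prim_w) // => /eqP; rewrite eq_sym oner_eq0.
Qed.

Lemma unity_roots_onto {F : fieldType} {n : nat} {f : 'I_n -> F} {y : F} :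
  (0 < n)%N -> injective f -> (forall i, f i ^+ n = 1) -> y ^+ n = 1 ->
  exists i, f i = y.
Proof.
move=> n_gt0 f_inj f_unity y_unity.
case: (pickP (fun i => f i == y)) => [i /eqP | y_new]; first by exists i.
have : (size (y :: codom f) <= n)%N.
  apply: max_unity_roots => //=.
    rewrite unity_rootE y_unity eqxx /=.
    by apply/allP => _ /codomP [i ->]; rewrite unity_rootE f_unity.
  rewrite {2}codomE map_inj_uniq // enum_uniq andbT.
  by apply/codomP => -[i /esym/eqP]; rewrite y_new.
by rewrite /= size_codom card_ord ltnn.
Qed.

Lemma expr_div_unity {F : fieldType} {n : nat} {x : F} a b :
  x ^+ n = 1 -> (x ^+ a / x ^+ b) ^+ n = 1.
Proof. by move=> xn; rewrite expr_div_n -!exprM !(mulnC _ n) !exprM xn !expr1n divr1. Qed.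

Lemma sum_prim_root_ratio {F : fieldType} {n : nat} {w : F} :
  n.-primitive_root w -> forall j j' : 'I_n,
  \sum_(k < n) (w ^+ j / w ^+ j') ^+ k = if j == j' then n%:R else 0.
Proof.
move=> prim_w j j'; have w_neq0 := prim_root_neq0 prim_w.
rewrite sum_expr_unity ?(expr_div_unity _ _ (prim_expr_order prim_w)) //.
rewrite (can2_eq (divfK _) (mulfK _)) ?expf_neq0 // mul1r.
by rewrite (inj_eq (prim_root_ord_inj prim_w)).
Qed.

Lemma normC_pow1 {x : algC} {n : nat} : (0 < n)%N -> `|x ^+ n| = 1 -> `|x| = 1.
Proof.
move=> n_gt0 xn1; apply/eqP; rewrite -(pexpr_eq1 n_gt0) ?normr_ge0 //.
by rewrite -normrX xn1.
Qed.

Lemma normC_prim_root {n : nat} {w : algC} : n.-primitive_root w -> `|w| = 1.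
Proof.
move=> prim_w; apply: (normC_pow1 (prim_order_gt0 prim_w)).
by rewrite (prim_expr_order prim_w) normr1.
Qed.

Lemma conjC_unimodular {x : algC} : `|x| = 1 -> x^* = x^-1.
Proof. by move=> x1; rewrite invC_norm x1 expr1n invr1 mul1r. Qed.

Lemma normC_1subr_sqr (x : algC) : `|x| = 1 -> `|1 - x| ^+ 2 = 2 - 2 * 'Re x.
Proof.
move=> x1; have xx : x * x^* = 1 by rewrite -normCK x1 expr1n.
rewrite normCK rmorphB rmorph1 ReE [2 * _]mulrC divfK ?pnatr_eq0 //.
by rewrite mulrBl !mulrBr mul1r mulr1 xx; ring.
Qed.

Lemma DFT_Parseval n (w : algC) (a : nat -> algC) : n.-primitive_root w ->
  \sum_(k < n) `|\sum_(j < n) a j * w ^+ (j * k)| ^+ 2 = n%:R * \sum_(j < n) `|a j| ^+ 2.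
Proof.
move=> prim_w; have w1 := normC_prim_root prim_w.
have orth := sum_prim_root_ratio prim_w.
have term (k j j' : 'I_n) : a j * w ^+ (j * k) * (a j' * w ^+ (j' * k))^* =
    a j * (a j')^* * (w ^+ j / w ^+ j') ^+ k.
  rewrite rmorphM rmorphXn /= (conjC_unimodular w1) expr_div_n -!exprM exprVn.
  by rewrite mulrACA.
under eq_bigr => k _ do
  rewrite normCK rmorph_sum big_distrl (eq_bigr _ (fun j _ => big_distrr _ _ _)).
rewrite exchange_big mulr_sumr; apply: eq_bigr => j _ /=.
under eq_bigr => k _ do under eq_bigr => j' _ do rewrite term.
rewrite exchange_big (bigD1 j) //= [X in _ + X]big1 ?addr0 => [|j' j'_neq_j].
  by rewrite -mulr_sumr orth eqxx normCK mulrC.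
by rewrite -mulr_sumr orth eq_sym (negbTE j'_neq_j) mulr0.
Qed.

Lemma exists_root_Re_gt {u : algC} {q : nat} : `|u| = 1 -> u != 1 -> (1 < q)%N ->
  exists2 z, z ^+ q = u & 'Re u < 'Re z.
Proof.
(* The q-th roots x k of u satisfy (1 - x k) * G (x k) = 1 - u, and by Parseval
   the |G (x k)| ^+ 2 add up to q ^ 2 > q, so some |1 - x k| < |1 - u|. *)
move=> u1 u_neq1 q_gt1; have q_gt0 := ltnW q_gt1.
have [rho prim_rho] := C_prim_root_exists q_gt0.
pose z0 := q.-root u; have z0q : z0 ^+ q = u by apply: rootCK.
have z01 : `|z0| = 1 by apply: (normC_pow1 q_gt0); rewrite z0q.
pose x (k : nat) := z0 * rho ^+ k.
have xq k : x k ^+ q = u.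
  by rewrite exprMn z0q exprAC (prim_expr_order prim_rho) expr1n mulr1.
pose G (y : algC) := \sum_(j < q) y ^+ j.
have geom k : (1 - x k) * G (x k) = 1 - u.
  by rewrite -opprB mulNr -subrX1 xq opprB.
have parseval : \sum_(k < q) `|G (x k)| ^+ 2 = q%:R * q%:R.
  have := DFT_Parseval _ _ (fun j => z0 ^+ j) prim_rho.
  under [in X in _ = X -> _]eq_bigr => j _ do rewrite normrX z01 !expr1n.
  rewrite sumr_const card_ord => <-; apply: eq_bigr => k _; congr (`|_| ^+ 2).
  by apply: eq_bigr => j _; rewrite exprMn -exprM mulnC.
case: (pickP (fun k : 'I_q => 'Re u < 'Re (x k))) => [k | Re_le]; first by exists (x k).
have G_le1 (k : 'I_q) : `|G (x k)| ^+ 2 <= 1.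
  have xk1 : `|x k| = 1 by apply: (normC_pow1 q_gt0); rewrite xq.
  have u_lt : 0 < `|1 - u| by rewrite normr_gt0 subr_eq0 eq_sym.
  have u_le : `|1 - u| <= `|1 - x k|.
    rewrite -(ler_pXn2r (isT : (0 < 2)%N)) ?nnegrE ?normr_ge0 //.
    rewrite !normC_1subr_sqr // lerD2l lerN2 ler_pM2l ?ltr0n //.
    by rewrite real_leNgt ?Creal_Re ?Re_le.
  rewrite exprn_ile1 // -(ler_pM2l (lt_le_trans u_lt u_le)) mulr1 -normrM geom.
  exact: u_le.
have : \sum_(k < q) `|G (x k)| ^+ 2 <= \sum_(k < q) 1 by apply: ler_sum => k _.
by rewrite parseval sumr_const card_ord -natrM ler_nat; nia.
Qed.

Lemma rootC_Re_max_real {n : nat} {x y : algC} : (0 < n)%N -> x \is Num.real ->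
  y ^+ n = x -> 'Re y <= 'Re (n.-root x).
Proof.
move=> n_gt0 x_real yn_x; have [Im_ge0 | Im_lt0] := real_ge0P (Creal_Im y).
  exact: rootC_Re_max.
rewrite -Re_conj; apply: rootC_Re_max => //.
  by rewrite -rmorphXn yn_x; apply: conj_Creal.
by rewrite Im_conj oppr_ge0 ltW.
Qed.

Lemma omega_prim_root n : (0 < n)%N -> n.-primitive_root (omega n).
Proof.
move=> n_gt0; pose y := n.-root (-1 : algC).
have yn : y ^+ n = -1 by apply: rootCK.
have N1_neq1 : ((-1 : algC) == 1) = false := lt_eqF (lt_trans (ltrN10 _) ltr01).
have y2n : (y ^+ 2) ^+ n = 1 by rewrite exprAC yn sqrrN expr1n.
have [m prim_m m_dvd_n] := prim_order_exists n_gt0 y2n.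
have [m_eq_n | m_neq_n] := eqVneq m n; first by rewrite m_eq_n in prim_m.
(* Otherwise y ^+ m = -1 with n = k m, k > 1, and a k-th root of y with a larger
   real part would be an n-th root of -1 beating the principal one. *)
exfalso.
have [k n_eq] := dvdnP m_dvd_n.
have k_gt1 : (1 < k)%N.
  case: k n_eq => [|[|k]] n_eq //; first by move: n_gt0; rewrite n_eq.
  by move: m_neq_n; rewrite n_eq mul1n eqxx.
have ym : y ^+ m = -1.
  have : (y ^+ m) ^+ 2 == 1 by rewrite exprAC (prim_expr_order prim_m).
  rewrite sqrf_eq1 => /orP [/eqP ym1 | /eqP //].
  by move: yn; rewrite n_eq mulnC exprM ym1 expr1n => /eqP; rewrite eq_sym N1_neq1.
have y1 : `|y| = 1 by apply: (normC_pow1 n_gt0); rewrite yn normrN1.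
have y_neq1 : y != 1 by apply: contraFneq N1_neq1 => y_eq1; rewrite -yn y_eq1 expr1n.
have [z zk Re_lt] := exists_root_Re_gt y1 y_neq1 k_gt1.
have zn : z ^+ n = -1 by rewrite n_eq exprM zk ym.
have N1_real : (-1 : algC) \is Num.real by rewrite realN real1.
by have := rootC_Re_max_real n_gt0 N1_real zn; move/(lt_le_trans Re_lt); rewrite ltxx.
Qed.

Lemma big_ord_mul (R : Type) (idx : R) (op : Monoid.law idx) m n (F : nat -> R) :
  \big[op/idx]_(k < m * n) F k = \big[op/idx]_(i < m) \big[op/idx]_(j < n) F (i * n + j)%N.
Proof.
rewrite -(big_mkord xpredT) big_nat_mul big_mkord; apply: eq_bigr => i _.
rewrite mulSn addnC -{1}[(i * n)%N]add0n big_addn addKn big_mkord.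
by apply: eq_bigr => j _; rewrite addnC.
Qed.

Lemma big_ord_mulC (R : Type) (idx : R) (op : Monoid.law idx) m n (F : nat -> R) :
  \big[op/idx]_(k < m * n) F k = \big[op/idx]_(j < n) \big[op/idx]_(i < m) F (j * m + i)%N.
Proof. by rewrite mulnC big_ord_mul. Qed.

Lemma addI_expr (F : fieldType) N (w : F) (x m : 'I_N) :
  w ^+ N = 1 -> w ^+ addI x m = w ^+ x * w ^+ m.
Proof. by move=> wN; rewrite /= expr_mod // exprD. Qed.

Lemma CFR_ratio_inj (F : fieldType) N K (pi : 'I_K -> {perm 'I_N}) (w : F) i j :
  N.-primitive_root w -> is_CFR pi -> i != j ->
  injective (fun s : 'I_N => w ^+ (pi j)^-1%g (pi i s) / w ^+ s).
Proof.
move=> prim_w CFR_pi i_neq_j s1 s2 eq_ratio; apply: contraNeq i_neq_j => s12; apply/eqP.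
have wN := prim_expr_order prim_w; have w_neq0 := prim_root_neq0 prim_w.
pose sigma s := (pi j)^-1%g (pi i s).
(* Shifting by m = s2 - s1 maps s1 to s2 and, by the equal ratios, sigma s1 to
   sigma s2, so the pairs of row i at s1 and row j at sigma s1 collide. *)
have [m wm] := prim_rootP prim_w (expr_div_unity s2 s1 wN).
have shift1 : addI s1 m = s2.
  by apply: (prim_root_ord_inj prim_w); rewrite addI_expr // -wm mulrC divfK ?expf_neq0.
have shift2 : addI (sigma s1) m = sigma s2.
  apply: (prim_root_ord_inj prim_w); rewrite addI_expr // -wm mulrCA.
  by rewrite [_ / w ^+ s1]eq_ratio mulrC divfK ?expf_neq0.
have m_neq0 : nat_of_ord m != 0%N.
  apply: contra_neq s12 => m0; rewrite -shift1; apply: val_inj.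
  by rewrite /= m0 addn0 modn_small.
have := (CFR_pi m m_neq0 i j s1 (sigma s1)).1.
by rewrite shift1 shift2 /sigma !permKV => /(_ erefl) [].
Qed.
Arguments CFR_ratio_inj {F N K pi w i j}.

Lemma sqrtC_scale {a b : nat} : (0 < a)%N -> (0 < b)%N ->
  (sqrtC (a * b)%:R)^-1 * (sqrtC (b%:R / a%:R) * a%:R) = 1 :> algC.
Proof.
move=> a_gt0 b_gt0; have a_neq0 : (a%:R : algC) != 0 by rewrite pnatr_eq0 -lt0n.
have a_sqrt : a%:R = sqrtC (a%:R ^+ 2) :> algC by rewrite sqrCK ?ler0n.
rewrite {2}a_sqrt -sqrtCM ?nnegrE ?divr_ge0 ?exprn_ge0 ?ler0n //.
rewrite expr2 mulrA divfK // -natrM mulnC mulVf // sqrtC_eq0 pnatr_eq0.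
by rewrite -lt0n muln_gt0 a_gt0 b_gt0.
Qed.

Section Signals.

Variables (N T K : nat) (pi : 'I_K -> {perm 'I_N}) (l : 'I_N -> 'I_(N + T)).
Variables (h : 'I_N -> 'I_N -> algC).
Hypotheses (N_gt0 : (0 < N)%N) (l_inj : injective l).

Local Notation P := (N + T)%N.
Local Notation L := (N * P)%N.
Local Notation w := (omega N).
Local Notation z := (omega L).
Local Notation eta := (omega L ^+ P).
Local Notation U := (useq pi l h).

Let P_gt0 : (0 < P)%N. Proof. by rewrite addn_gt0 N_gt0. Qed.
Let L_gt0 : (0 < L)%N. Proof. by rewrite muln_gt0 N_gt0. Qed.
Let prim_w : N.-primitive_root w. Proof. exact: omega_prim_root N_gt0. Qed.
Let prim_z : L.-primitive_root z. Proof. exact: omega_prim_root L_gt0. Qed.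

Let prim_eta : N.-primitive_root eta.
Proof. by have := dvdn_prim_root prim_z (dvdn_mulr P (dvdnn N)); rewrite mulKn. Qed.

Let prim_zN : P.-primitive_root (z ^+ N).
Proof. by have := dvdn_prim_root prim_z (dvdn_mull N (dvdnn P)); rewrite mulnK. Qed.

Let eta_inv_unity t : ((eta ^+ t)^-1) ^+ N = 1.
Proof. by rewrite -div1r -(expr0 eta) expr_div_unity ?(prim_expr_order prim_eta). Qed.

(* The g with w ^+ g * eta ^+ t = 1.  In fact eta = w and slot t = -t mod N, but
   only the primitivity of eta is used. *)
Definition slot (t : nat) : 'I_N := sval (prim_rootP prim_w (eta_inv_unity t)).

Lemma slot_expr t : w ^+ slot t = (eta ^+ t)^-1.
Proof. exact: esym (svalP (prim_rootP prim_w (eta_inv_unity t))). Qed.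

Lemma slot_eq (g : 'I_N) t : (w ^+ g * eta ^+ t == 1) = (g == slot t).
Proof.
rewrite -(inj_eq (prim_root_ord_inj prim_w)) slot_expr.
have eta_t_neq0 : eta ^+ t != 0 by rewrite expf_neq0 ?(prim_root_neq0 prim_eta).
by rewrite (can2_eq (mulfK eta_t_neq0) (divfK eta_t_neq0)) div1r.
Qed.

Lemma slot_mod {a b : nat} : a = b %[mod N] -> slot a = slot b.
Proof.
move=> eq_ab; apply: (prim_root_ord_inj prim_w).
by rewrite !slot_expr -(prim_expr_mod prim_eta a) eq_ab prim_expr_mod.
Qed.

Lemma slot_inj : injective (fun x : 'I_N => slot x).
Proof.
move=> x y /(congr1 (fun g : 'I_N => w ^+ g)); rewrite /= !slot_expr.
by move/invr_inj/(prim_root_ord_inj prim_eta).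
Qed.

Lemma slotD x tau : w ^+ slot (x + tau) = w ^+ slot x * (eta ^+ tau)^-1.
Proof. by rewrite !slot_expr exprD invfM. Qed.

Lemma slotD_eq x tau : slot (x + tau) = slot x -> (N %| tau)%N.
Proof.
move/(congr1 (fun g : 'I_N => w ^+ g)); rewrite /= slotD -{2}[w ^+ _]mulr1.
move/(mulfI (expf_neq0 _ (prim_root_neq0 prim_w)))/eqP.
by rewrite invr_eq1 -(prim_order_dvd prim_eta).
Qed.

Lemma dentry_image i c j (t : 'I_N) :
  dentry pi l h i c j (l t) = sqrtC (P%:R / N%:R) * w ^+ (j * ginv pi i t) * h c t.
Proof.
rewrite /dentry; case: pickP => [t' /eqP/val_inj/l_inj -> // | /(_ t)].
by rewrite eqxx.
Qed.

Lemma dentry_off_image i c j k : (forall t, nat_of_ord (l t) != k) -> dentry pi l h i c j k = 0.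
Proof. by move=> k_out; rewrite /dentry; case: pickP => // t; rewrite (negbTE (k_out t)). Qed.

Lemma uhat_dentry i c r s : (s < P)%N -> uhat pi l h i c (r * P + s) = dentry pi l h i c r s.
Proof. by move=> s_lt; rewrite /uhat divnMDl // divn_small // addn0 modnMDl modn_small. Qed.

Lemma sum_dentry i c j (W : nat -> algC) :
  \sum_(s < P) dentry pi l h i c j s * W s = \sum_(t < N) dentry pi l h i c j (l t) * W (l t).
Proof.
rewrite (bigID (mem (codom l))) /= [X in _ + X]big1 ?addr0 => [|s s_out]; last first.
  rewrite dentry_off_image ?mul0r // => t.
  by apply: contraNneq s_out => /val_inj <-; apply: codom_f.
rewrite -big_uniq /=; last by rewrite codomE map_inj_uniq ?enum_uniq.
by rewrite big_image.
Qed.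

Lemma useqE i c t :
  U i c t = h c (pi i (slot t)) * z ^+ (l (pi i (slot t)) * t).
Proof.
have term (r : 'I_N) (t' : 'I_N) :
    dentry pi l h i c r (l t') * z ^+ ((r * P + l t') * t) =
    sqrtC (P%:R / N%:R) * (h c t' * z ^+ (l t' * t)) *
      (w ^+ ginv pi i t' * eta ^+ t) ^+ r.
  rewrite dentry_image; move: (omega N) (omega L) => w0 z0.
  rewrite mulnDl exprD exprMn -!exprM [(ginv _ _ _ * r)%N]mulnC [(P * t * r)%N]mulnC mulnA.
  by ring.
rewrite /useq (big_ord_mul _ _ _ N P (fun n => uhat pi l h i c n * z ^+ (n * t))) /=.
have unity t' : (w ^+ (pi i)^-1%g t' * eta ^+ t) ^+ N = 1.
  have := prim_expr_order prim_eta; have := prim_expr_order prim_w.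
  by move: w eta => x y xN yN; rewrite exprMn !(exprAC _ _ N) xN yN !expr1n mulr1.
under eq_bigr => r _.
  rewrite (eq_bigr _ (fun s _ => congr1 (fun v => v * _) (uhat_dentry i c r _ (ltn_ord s)))).
  rewrite (sum_dentry i c r (fun s => z ^+ ((r * P + s) * t))).
  under eq_bigr => t' _ do rewrite term.
over.
rewrite exchange_big /= (bigD1 (pi i (slot t))) //= [X in _ + X]big1 ?addr0 => [|t' t'_neq].
  rewrite -mulr_sumr sum_expr_unity ?unity // slot_eq permK eqxx mulrA mulrAC.
  set X := h c _ * _.
  transitivity ((sqrtC L%:R)^-1 * (sqrtC (P%:R / N%:R) * N%:R) * X); first by ring.
  by rewrite sqrtC_scale ?mul1r.
rewrite -mulr_sumr sum_expr_unity ?unity // slot_eq.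
by rewrite (can2_eq (permKV _) (permK _)) (negbTE t'_neq) mulr0.
Qed.

Lemma pcorrE i i' c0 c1 tau :
  pcorr L (U i c0) (U i' c1) tau =
  P%:R * \sum_(x < N) (if pi i (slot x) == pi i' (slot (x + tau)) then
    h c0 (pi i (slot x)) * (h c1 (pi i (slot x)))^* / z ^+ (l (pi i (slot x)) * tau) else 0).
Proof.
pose A t := pi i (slot t); pose B t := pi i' (slot (t + tau)).
have z1 := normC_prim_root prim_z.
have corr_term t : U i c0 t * (U i' c1 ((t + tau) %% L))^* =
    h c0 (A t) * (h c1 (B t))^* * (z ^+ (l (A t) * t) / z ^+ (l (B t) * (t + tau))).
  rewrite !useqE (slot_mod (modn_dvdm _ (dvdn_mulr _ (dvdnn N)))).
  rewrite -(prim_expr_mod prim_z (_ * ((t + tau) %% L))) modnMmr (prim_expr_mod prim_z).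
  by rewrite rmorphM rmorphXn /= (conjC_unimodular z1) exprVn mulrACA.
have periodA y x : A (y * N + x)%N = A x by rewrite /A (slot_mod (modnMDl _ _ _)).
have periodB y x : B (y * N + x)%N = B x by rewrite /B -addnA (slot_mod (modnMDl _ _ _)).
rewrite /pcorr; under eq_bigr => t _ do rewrite corr_term.
rewrite (big_ord_mulC _ _ _ N P (fun t => h c0 (A t) * (h c1 (B t))^* *
  (z ^+ (l (A t) * t) / z ^+ (l (B t) * (t + tau))))) exchange_big mulr_sumr.
apply: eq_bigr => x _ /=.
have zsplit y : z ^+ (l (A x) * (y * N + x)) / z ^+ (l (B x) * (y * N + x + tau)) =
    z ^+ (l (A x) * x) / z ^+ (l (B x) * (x + tau)) *
    ((z ^+ N) ^+ l (A x) / (z ^+ N) ^+ l (B x)) ^+ y.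
  have e k : (k * (y * N) = N * k * y)%N by ring.
  move: (omega L) => z0.
  by rewrite -addnA !mulnDr !exprD !invfM expr_div_n -!exprM !e; ring.
under eq_bigr => y _ do rewrite periodA periodB zsplit mulrA.
rewrite -mulr_sumr (sum_prim_root_ratio prim_zN) (inj_eq l_inj) /A /B.
case: eqP => [<- | _]; last by rewrite !mulr0.
rewrite mulrC -!mulrA; congr (_ * (_ * _)).
congr (_ * _); have z_neq0 := prim_root_neq0 prim_z.
by rewrite [(_ * (x + tau))%N]mulnDr exprD invfM mulrA mulfV ?mul1r // expf_neq0.
Qed.

Lemma pcorr_zero_zone i c0 c1 tau : (0 < tau < N)%N -> pcorr L (U i c0) (U i c1) tau = 0.
Proof.
case/andP=> tau_gt0 tau_lt; rewrite pcorrE big1 ?mulr0 // => x _.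
rewrite (inj_eq perm_inj); case: eqP => // /esym/slotD_eq/(dvdn_leq tau_gt0).
by rewrite leqNgt tau_lt.
Qed.

Lemma pcorr_at0 i c0 c1 :
  pcorr L (U i c0) (U i c1) 0 = P%:R * \sum_(s < N) h c0 s * (h c1 s)^*.
Proof.
rewrite pcorrE; congr (_ * _).
have slot_perm_inj : injective (fun x : 'I_N => pi i (slot x)).
  by move=> x y /perm_inj/slot_inj.
rewrite [RHS](reindex_inj slot_perm_inj) /=; apply: eq_bigr => x _.
by rewrite addn0 eqxx muln0 expr0 divr1.
Qed.

Lemma pcorr_cross i i' c0 c1 tau : is_CFR pi -> i != i' -> (forall c s, `|h c s| = 1) ->
  `|pcorr L (U i c0) (U i' c1) tau| = P%:R.
Proof.
move=> CFR_pi i_neq_i' h1.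
pose f (x : 'I_N) : algC := w ^+ (pi i')^-1%g (pi i (slot x)) / w ^+ slot x.
have f_inj : injective f.
  by move=> x y /(CFR_ratio_inj prim_w CFR_pi i_neq_i')/slot_inj.
have f_unity x : f x ^+ N = 1 := expr_div_unity _ _ (prim_expr_order prim_w).
have target_unity : ((eta ^+ tau)^-1) ^+ N = 1 := eta_inv_unity tau.
(* f is injective into the N-th roots of unity, so exactly one x hits the target. *)
have [x0 fx0] := unity_roots_onto N_gt0 f_inj f_unity target_unity.
have hit (x : 'I_N) : (pi i (slot x) == pi i' (slot (x + tau))) = (x == x0).
  have w_slot_neq0 : w ^+ slot x != 0 by rewrite expf_neq0 ?(prim_root_neq0 prim_w).
  rewrite eq_sym (can2_eq (permK _) (permKV _)) -[x == x0](inj_eq f_inj) fx0 /f.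
  rewrite -[slot _ == _](inj_eq (prim_root_ord_inj prim_w)) /= slotD.
  rewrite (can2_eq (divfK w_slot_neq0) (mulfK w_slot_neq0)).
  by rewrite eq_sym mulrC.
rewrite pcorrE; under eq_bigr => x _ do rewrite hit.
rewrite -big_mkcond big_pred1_eq normrM normr_nat !normrM norm_conjC !h1 normfV.
by rewrite normrX (normC_prim_root prim_z) !expr1n invr1 !mulr1.
Qed.

Lemma useq_unimodular i c t : (forall c s, `|h c s| = 1) -> `|U i c t| = 1.
Proof.
move=> h1; rewrite useqE normrM h1 normrX (normC_prim_root prim_z).
by rewrite expr1n mulr1.
Qed.

Lemma mem_OmegaSet (I : {set 'I_P}) (n : 'I_L) :
  (n \in OmegaSet N I) = (Ordinal (ltn_pmod n P_gt0) \in I).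
Proof.
rewrite inE; apply/existsP/idP => [[s /existsP [a /andP [sI /eqP n_eq]]] | nI].
  suff -> : Ordinal (ltn_pmod n P_gt0) = s by [].
  by apply: val_inj; rewrite /= n_eq [(s + _)%N]addnC modnMDl modn_small.
have n_div_lt : (n %/ P < N)%N by rewrite ltn_divLR // mulnC ltn_ord.
exists (Ordinal (ltn_pmod n P_gt0)); apply/existsP; exists (Ordinal n_div_lt).
by rewrite nI /=; apply/eqP; rewrite [(_ %% _ + _)%N]addnC; apply: divn_eq.
Qed.

Lemma card_OmegaSet (I : {set 'I_P}) : #|OmegaSet N I| = (#|I| * N)%N.
Proof.
have g_lt (p : 'I_P * 'I_N) : (p.1 + p.2 * P < L)%N.
  by have := ltn_ord p.1; have := ltn_ord p.2; nia.
pose g p : 'I_L := Ordinal (g_lt p).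
have g_inj : injective g.
  move=> [s a] [s' a'] /(congr1 val) /= eq_sa.
  have eq_s : s = s'.
    apply: val_inj; move: (congr1 (modn^~ P) eq_sa) => /=.
    by rewrite ![(_ + _ * P)%N]addnC !modnMDl !modn_small.
  move: eq_sa; rewrite eq_s => /addnI /eqP; rewrite eqn_mul2r eqn0Ngt P_gt0 /=.
  by move/eqP/val_inj ->.
suff -> : OmegaSet N I = g @: setX I setT by rewrite card_imset // cardsX cardsT card_ord.
apply/setP => n; rewrite inE; apply/existsP/imsetP.
  move=> [s /existsP [a /andP [sI /eqP n_eq]]].
  exists (s, a); first by rewrite in_setX sI in_setT.
  by apply: val_inj.
move=> [[s a]]; rewrite in_setX in_setT andbT /= => sI ->.
by exists s; apply/existsP; exists a; rewrite sI /=.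
Qed.

Section Spectrum.

Variable I : {set 'I_P}.
Hypothesis I_compl : forall k : 'I_P, k \notin I <-> exists t, l t = k.

Lemma uhat_Omega i c (n : 'I_L) : n \in OmegaSet N I -> uhat pi l h i c n = 0.
Proof.
rewrite mem_OmegaSet => nI; rewrite /uhat dentry_off_image // => t.
apply: contraTneq nI => ln; apply/(I_compl _).2; exists t; exact: val_inj.
Qed.

Lemma uhat_notin_Omega i c (n : 'I_L) : (forall c s, `|h c s| = 1) ->
  n \notin OmegaSet N I -> `|uhat pi l h i c n| = sqrtC (P%:R / N%:R).
Proof.
rewrite mem_OmegaSet => h1 /(I_compl _).1 [t lt].
rewrite /uhat (_ : (n %% P)%N = l t); last by rewrite lt.
rewrite dentry_image !normrM ger0_norm ?sqrtC_ge0 ?divr_ge0 ?ler0n // h1.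
by rewrite normrX (normC_prim_root prim_w) expr1n !mulr1.
Qed.

End Spectrum.

End Signals.

Theorem theorem7 (N K T : nat) (pi : 'I_K -> {perm 'I_N})
    (I : {set 'I_(N + T)}) (l : 'I_N -> 'I_(N + T))
    (h : 'I_N -> 'I_N -> algC) :
  (3 <= N)%N -> odd N -> is_Ftilde N K -> is_CFR pi ->
  (1 <= T)%N -> #|I| = T ->
  (forall t t' : 'I_N, (t < t')%N -> (l t < l t')%N) ->
  (forall k : 'I_(N + T), k \notin I <-> exists t, l t = k) ->
  (forall c s, `|h c s| = 1) ->
  (forall c0 c1, c0 != c1 -> \sum_(s < N) h c0 s * (h c1 s)^* = 0) ->
  let P := (N + T)%N in
  let L := (N * P)%N in
  let U := useq pi l h in
  let Om := OmegaSet N I in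
  (* (0) unimodularity *)
  (forall i c (t : nat), (t < L)%N -> `|U i c t| = 1) /\
  (* (1) spectral nulls on Omega, constant modulus elsewhere *)
  (forall i c (n : 'I_L),
      (n \in Om -> uhat pi l h i c n = 0) /\
      (n \notin Om -> `|uhat pi l h i c n| = sqrtC (P%:R / N%:R))) /\
  (* (2) each U^i is an (N, NP, N)-ZCZ set *)
  (forall i c (tau : nat), (0 < tau < N)%N -> pcorr L (U i c) (U i c) tau = 0) /\
  (forall i c0 c1 (tau : nat), c0 != c1 -> (tau < N)%N ->
      pcorr L (U i c0) (U i c1) tau = 0) /\
  (L - #|Om| = N ^ 2 /\ N ^ 2 = N * N)%N /\
  (* (3) inter-set cross-correlation *)
  (forall i i' c0 c1 (tau : nat), i != i' -> (tau < L)%N ->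
      `|pcorr L (U i c0) (U i' c1) tau| = (P%:R : algC) /\
      (P%:R : algC) = L%:R / sqrtC (L - #|Om|)%:R).
Proof.
move=> N_ge3 _ _ CFR_pi _ card_I l_mono I_compl h1 h_orth P L U Om.
have N_gt0 : (0 < N)%N by apply: leq_trans N_ge3.
have l_inj : injective l.
  move=> t t' lt_eq; apply/eqP; rewrite -val_eqE.
  by case: ltngtP => [/l_mono | /l_mono |] //; rewrite lt_eq ltnn.
have card_Om : (L - #|Om| = N * N)%N.
  by rewrite card_OmegaSet // card_I /L /P mulnDr [(T * N)%N]mulnC addnK.
split; first by move=> i c t _; apply: useq_unimodular.
split; first by move=> i c n; split; [apply: uhat_Omega | apply: uhat_notin_Omega].
split; first by move=> i c tau; apply: pcorr_zero_zone.
split.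
  move=> i c0 c1 tau c01 tau_lt; have [-> | tau_gt0] := posnP tau.
    by rewrite pcorr_at0 // h_orth ?mulr0.
  by apply: pcorr_zero_zone; rewrite ?tau_gt0.
split; first by rewrite card_Om mulnn.
move=> i i' c0 c1 tau i_neq_i' _; split; first exact: pcorr_cross.
have N_neq0 : N%:R != 0 :> algC by rewrite pnatr_eq0 -lt0n.
by rewrite card_Om natrM -expr2 sqrCK ?ler0n // /L natrM mulrAC mulfV ?mul1r.
Qed.
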